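(* Let $r\ge 1$. If an $r$-cap exists, then $r\le R$; specifically, there is a constant $b$ such that for every $k\in\{0,1,2,\dots\}$ there is a wall whose graph has clique size $k$ and which uses at least $rk-b$ colors.
   Context: All graphs are finite; $\omega(G)$ is the clique number. $R := \sup\{\chi_{FF}(G)/\omega(G) : G \text{ a nonempty interval graph}\}$, where $\chi_{FF}(G)$ is the maximum over all vertex orders of the number of colors used by the first-fit algorithm (which colors vertices in order, giving each the least positive integer not used on an earlier neighbor). An interval graph $G=(V,E)$ comes with an interval representation $v\mapsto I_v$ (intervals of $\mathbb{R}$, distinct $u,v$ adjacent iff $I_u\cap I_v\ne\emptyset$). $N[v]$ is the closed neighborhood of $v$, and $f(U)$ is the image of $U$ under $f$. A wall is a pair $(G,f)$ where $G$ is an interval graph on vertex set $V$ with a given interval representation, $f\colon V\to\{1,2,\dots\}$ is a proper coloring, and $f(N[v])\supseteq\{1,\dots,f(v)\}$ for every $v\in V$; it uses $|f(V)|$ colors, and its clique size is $\omega(G)$. An $r$-cap is a tuple $(G,f,v\mapsto I_v, v\mapsto J_v, v\mapsto c_v)$ where: $G$ is a finite nonempty interval graph on vertex set $V$ with interval representation $v\mapsto I_v$ (intervals of finite length); $f\colon V\to\{0,-1,-2,\dots\}$ is a proper coloring of $G$ with $f(v)=0$ for some $v\in V$; for each $v\in V$, $J_v\subseteq I_v$ is an interval of positive length, and for all $u,v\in V$, $J_u\cap J_v\ne\emptyset$ implies $J_u=J_v$; writing $C_v := f(\{u\in V : I_u\cap J_v\ne\emptyset\})$, for each $v\in V$ there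 is $c_v\in\{-1,-2,\dots\}$ with $|C_v\cap(-\infty,c_v]|=0$, $|C_v\cap(c_v,0]|\le -c_v/r$, and $\mathbb{Z}\cap(c_v,f(v)]\subseteq f(N[v])$. *)

From HB Require Import structures.
From mathcomp Require Import all_boot all_order all_algebra.
From mathcomp Require Import boolp classical_sets reals constructive_ereal ereal.
From mathcomp Require Import Rstruct.
From mathcomp Require Import fingroup perm.
From Stdlib Require Import Rdefinitions.
Set Implicit Arguments. Unset Strict Implicit. Unset Printing Implicit Defensive.
Import Order.TTheory GRing.Theory Num.Theory.
Local Open Scope ring_scope.

Notation R := Rdefinitions.R.

Definition is_interval (S : R -> Prop) : Prop :=
  (exists x, S x) /\ (forall x y z, S x -> S z -> x <= y -> y <= z -> S y).
Definition finite_length (S : R -> Prop) : Prop :=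
  exists a b : R, forall x, S x -> a <= x /\ x <= b.
Definition positive_length (S : R -> Prop) : Prop :=
  exists x y : R, S x /\ S y /\ x < y.
Definition meets (S T : R -> Prop) : Prop := exists x, S x /\ T x.

Section Graphs.
Variable V : finType.
Variable I : V -> R -> Prop.

Definition adj (u v : V) : Prop := u <> v /\ meets (I u) (I v).
Definition in_closed_nbhd (u v : V) : Prop := u = v \/ adj u v.

Definition is_clique (A : {set V}) : Prop :=
  forall u v, u \in A -> v \in A -> u <> v -> adj u v.
Definition omega : nat := (\max_(A : {set V} | `[< is_clique A >]) #|A|)%N.

(* [ff_run done s]: color the vertices of s in order, [done] being the list of
   already colored (vertex, color) pairs; each vertex gets the least positive
   integer not used on an earlier neighbor. *)
Fixpoint ff_run (done : seq (V * nat)) (s : seq V) : seq (V * nat) :=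
  match s with
  | [::] => done
  | v :: s' =>
      let used := [seq p.2 | p <- done & `[< adj p.1 v >]] in
      let c := (find (fun n => n.+1 \notin used) (iota 0 (size used).+1)).+1 in
      ff_run (rcons done (v, c)) s'
  end.
Definition ff_colors (s : seq V) : nat :=
  size (undup [seq p.2 | p <- ff_run [::] s]).
Definition chiFF : nat := (\max_(p : {perm V}) ff_colors [seq p x | x <- enum V])%N.

Definition is_wall (f : V -> nat) : Prop :=
  [/\ (forall v, is_interval (I v)),
      (forall v, leq 1 (f v)),
      (forall u v, adj u v -> f u <> f v) &
      (forall v c, leq 1 c -> leq c (f v) ->
          exists u, in_closed_nbhd u v /\ f u = c)].
Definition colors_used (f : V -> nat) : nat := size (undup [seq f v | v <- enum V]).

(* C_v = f({u : I_u meets J_v}) as a list (with repetitions) *)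
Definition Cset (f : V -> int) (J : V -> R -> Prop) (v : V) : seq int :=
  [seq f u | u <- enum V & `[< meets (I u) (J v) >]].

Definition is_cap (r : R) (f : V -> int) (J : V -> R -> Prop) (c : V -> int) : Prop :=
  [/\ (exists v : V, True) /\ (forall v, is_interval (I v) /\ finite_length (I v)),
      ((forall v, f v <= 0) /\ (exists v, f v = 0)) /\
        (forall u v, adj u v -> f u <> f v),
      (forall v, [/\ is_interval (J v), positive_length (J v)
                   & forall x, J v x -> I v x]),
      (forall u v, meets (J u) (J v) -> forall x, J u x <-> J v x) &
      (forall v,
         [/\ c v <= -1,
             size (undup [seq z <- Cset f J v | z <= c v]) = 0%N,
             ((size (undup [seq z <- Cset f J v | (c v < z) && (z <= 0)]))%:R : R)
               <= - ((c v)%:~R) / r &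
             (forall z : int, c v < z -> z <= f v ->
                 exists u, in_closed_nbhd u v /\ f u = z)])].
End Graphs.

Definition Rsup : \bar R :=
  ereal_sup [set x : \bar R | exists (V : finType) (I : V -> R -> Prop),
      [/\ (exists v : V, True), (forall v, is_interval (I v)) &
          x = ((chiFF I)%:R / (omega I)%:R : R)%:E]].

(* An r-cap drives an induction on the top color N.  Suppose that for every
   M < N there is a wall with top color M, drawn inside [0, 1], whose depth
   (the largest number of intervals through a point) is at most M / r + B,
   where B is the number of cap vertices.  Shift the colors of the cap up by N,
   drop the vertices whose color becomes nonpositive, and place inside J_v a
   scaled copy of the wall of top color N + c_v.  The condition
   Z ∩ (c_v, f v] ⊆ f(N[v]) makes the result a wall of top color N: the copy
   in J_v uses colors at most N + c_v, below every cap color meeting J_v.  A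
   point of J_v lies in at most -c_v / r cap intervals and (N + c_v) / r + B
   intervals of the copy, so the depth bound N / r + B propagates.
   By Helly's theorem the clique number of an interval graph is its depth, so
   padding with a clique of k ~ N / r intervals yields clique number k; and
   first-fit run in increasing color order reproduces any wall coloring, so
   chi_FF >= N ~ r k. *)

From Pilot Require Import Defs.
From mathcomp Require Import all_boot all_order all_algebra.
From mathcomp Require Import boolp constructive_ereal ereal.
From mathcomp Require Import Rstruct.
From mathcomp Require Import perm.
From mathcomp Require Import zify ring lra.
Set Implicit Arguments. Unset Strict Implicit. Unset Printing Implicit Defensive.
Import Order.TTheory GRing.Theory Num.Theory.
Local Open Scope ring_scope.

Section Rescale.
Variables (a m : R).
Hypothesis m_gt0 : 0 < m.

Let affineK z : a + m * ((z - a) / m) = z.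
Proof. by rewrite mulrC divfK ?gt_eqF // addrC subrK. Qed.

Lemma is_interval_affine (P : R -> Prop) :
  is_interval P -> is_interval (fun z => P (a + m * z)).
Proof.
move=> [[t Pt] convP]; split; first by exists ((t - a) / m); rewrite affineK.
by move=> x y z Px Pz xy yz; apply: (convP _ _ _ Px Pz); rewrite lerD2l ler_pM2l.
Qed.

Lemma meets_affine (P Q : R -> Prop) :
  Defs.meets (fun z => P (a + m * z)) (fun z => Q (a + m * z)) <-> Defs.meets P Q.
Proof.
split=> -[x PQx]; first by exists (a + m * x).
by exists ((x - a) / m); rewrite affineK.
Qed.

Variable V : finType.

Definition rescale (I : V -> R -> Prop) (v : V) (z : R) : Prop := I v (a + m * z).

Lemma adj_rescale (I : V -> R -> Prop) u v : adj (rescale I) u v <-> adj I u v.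
Proof. by split=> -[uv meet]; split=> //; [move/meets_affine: meet | apply/meets_affine]. Qed.

Lemma is_wall_rescale (I : V -> R -> Prop) (f : V -> nat) :
  is_wall I f -> is_wall (rescale I) f.
Proof.
case=> I_int f_pos f_proper f_nbhd; split => //.
- by move=> v; apply: is_interval_affine.
- by move=> u v /adj_rescale; apply: f_proper.
- move=> v k k1 kv; have [u [uv fu]] := f_nbhd v k k1 kv.
  by exists u; split=> //; case: uv => [->|uv]; [left | right; apply/adj_rescale].
Qed.

End Rescale.

Definition depth (V : finType) (I : V -> R -> Prop) (x : R) : nat :=
  #|[set v | `[< I v x >]]|.

Lemma card_set_sum (T1 T2 : finType) (P : pred (T1 + T2)) :
  #|[set w | P w]| = (#|[set x | P (inl x)]| + #|[set y | P (inr y)]|)%N.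
Proof.
rewrite -!sum1_card (eq_bigl P) => [|w]; last by rewrite inE.
by rewrite big_sumType; congr (_ + _)%N; apply: eq_bigl => x; rewrite inE.
Qed.

Lemma card_set_tag_le (T : finType) (T_ : T -> finType) (P : pred {i : T & T_ i}) i :
  (forall s, P s -> tag s = i) ->
  (#|[set s | P s]| <= #|[set x : T_ i | P (Tagged T_ x)]|)%N.
Proof.
move=> tagP; apply: leq_trans (leq_imset_card (Tagged T_) _).
apply/subset_leq_card/fintype.subsetP => -[j x]; rewrite inE => Px.
by move: (tagP _ Px) => /= ji; subst j; apply: imset_f; rewrite inE.
Qed.

Lemma finite_family_bounded (T : finType) (S : T -> R -> Prop) :
  (forall v, finite_length (S v)) ->
  exists M, 0 < M /\ forall v t, S v t -> - M <= t <= M.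
Proof.
move=> S_bdd.
have /boolp.choice[ab abP] : forall v, exists ab : R * R,
    forall t, S v t -> ab.1 <= t <= ab.2.
  by move=> v; have [a [b ab]] := S_bdd v; exists (a, b) => t /ab[-> ->].
pose F v := `|(ab v).1| + `|(ab v).2|.
have F_ge0 v : 0 <= F v by rewrite addr_ge0.
exists (1 + \sum_v F v); split; first by rewrite ltr_pwDl // sumr_ge0.
move=> v t /abP/andP[lo_t t_hi].
have : F v <= \sum_v F v by rewrite (bigD1 v) //= lerDl sumr_ge0.
have := normr_ge0 (ab v).1; have := normr_ge0 (ab v).2.
have := ler_norm (ab v).2; have := ler_norm (- (ab v).1); rewrite normrN /F.
by move=> *; apply/andP; split; lra.
Qed.

Section IntervalCliques.
Variables (V : finType) (I : V -> R -> Prop).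
Hypothesis I_interval : forall v, is_interval (I v).

(* Helly on the line: for each [u] take the least chosen common point of [I u]
   with another member; the largest of these lies in every interval. *)
Lemma clique_common_point (A : {set V}) u0 : u0 \in A -> is_clique I A ->
  exists x, forall v, v \in A -> I v x.
Proof.
move=> u0A A_clique.
have /boolp.choice[p pP] : forall uv : V * V, exists t,
    uv.1 \in A -> uv.2 \in A -> I uv.1 t /\ I uv.2 t.
  move=> [u v] /=; have [<-|uv] := pselect (u = v).
    by have [[t It] _] := I_interval u; exists t.
  have [[uA vA]|notA] := pselect (u \in A /\ v \in A).
    by have [_ [t It]] := A_clique u v uA vA uv; exists t.
  by exists 0 => uA vA; exfalso; apply: notA.
pose left u := p (u, [arg min_(w < u | w \in A) p (u, w)]%O).
have left_le u w : u \in A -> w \in A -> left u <= p (u, w).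
  by move=> uA wA; rewrite /left; case: arg_minP => // i _; apply.
have I_left u : u \in A -> I u (left u).
  by move=> uA; rewrite /left; case: arg_minP => // i iA _; case: (pP (u, i) uA iA).
pose us := [arg max_(u > u0 | u \in A) left u]%O.
have usA : us \in A by rewrite /us; case: arg_maxP.
have left_le_us v : v \in A -> left v <= left us.
  by move=> vA; rewrite /us; case: arg_maxP => // i _; apply.
exists (left us) => v vA; have [_ I_conv] := I_interval v.
apply: (I_conv (left v) _ (p (us, v))); first exact: I_left.
- by case: (pP (us, v) usA vA).
- exact: left_le_us.
- exact: left_le.
Qed.

Lemma omega_le_depth k : (forall x, depth I x <= k)%N -> (omega I <= k)%N.
Proof.
move=> depth_le; apply/bigmax_leqP => A /asboolP A_clique.
have [->|[u0 u0A]] := set_0Vmem A; first by rewrite cards0.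
have [x Ax] := clique_common_point u0A A_clique.
apply: leq_trans (depth_le x); apply/subset_leq_card/fintype.subsetP => v vA.
by rewrite inE; apply/asboolP/Ax.
Qed.

End IntervalCliques.

Lemma card_clique_le_omega (V : finType) (I : V -> R -> Prop) (A : {set V}) :
  is_clique I A -> (#|A| <= omega I)%N.
Proof.
move=> A_clique.
apply: (leq_bigmax_cond (P := fun A => `[< is_clique I A >]) (F := fun A => #|A|)).
exact/asboolP.
Qed.

Lemma find_iota0 (P : pred nat) m j : (j < m)%N -> P j ->
  (forall n, (n < j)%N -> ~~ P n) -> find P (iota 0 m) = j.
Proof.
move=> jm Pj before_j.
have hasP : has P (iota 0 m) by apply/hasP; exists j; rewrite ?mem_iota.
have find_lt : (find P (iota 0 m) < m)%N by rewrite -[m in (_ < m)%N](size_iota 0) -has_find.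
apply/anti_leq/andP; split; rewrite leqNgt; apply/negP => lt.
  by move: (before_find 0 lt); rewrite nth_iota // Pj.
by move: (nth_find 0 hasP); rewrite nth_iota // add0n (negbTE (before_j _ lt)).
Qed.

Lemma perm_of_perm_eq_enum (T : finType) (s : seq T) :
  perm_eq s (enum T) -> exists p : {perm T}, [seq p x | x <- enum T] = s.
Proof.
move=> s_perm; have s_size : size s = size (enum T) by apply: perm_size.
have s_uniq : uniq s by rewrite (perm_uniq s_perm) enum_uniq.
pose g x := nth x s (index x (enum T)).
have idx_lt x : (index x (enum T) < size s)%N by rewrite s_size index_mem mem_enum.
have g_inj : injective g.
  move=> x y; rewrite /g (set_nth_default x y (idx_lt y)) => /eqP.
  rewrite nth_uniq ?idx_lt // => /eqP.
  exact: index_inj (mem_enum _ x) (mem_enum _ y).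
exists (perm g_inj); case E: (enum T) => [|x0 e].
  by apply/esym/size0nil; rewrite s_size E.
rewrite -E; apply: (eq_from_nth (x0 := x0)); first by rewrite size_map s_size.
move=> i; rewrite size_map => i_lt; rewrite (nth_map x0) // permE /g.
by rewrite index_uniq ?enum_uniq ?s_size //; apply: set_nth_default; rewrite s_size.
Qed.

Section FirstFitOnWalls.
Variables (V : finType) (I : V -> R -> Prop) (f : V -> nat).
Hypothesis f_wall : is_wall I f.

Lemma first_fit_choice pre v post :
  pairwise (relpre f leq) (pre ++ v :: post) -> (forall u, u \in pre ++ v :: post) ->
  let used := [seq f x | x <- pre & `[< adj I x v >]] in
  (find (fun n => n.+1 \notin used) (iota 0 (size used).+1)).+1 = f v.
Proof.
case: f_wall => _ f_pos f_proper f_nbhd.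
rewrite pairwise_cat pairwise_cons => /and3P[_ _ /andP[/allP le_post _]] all_s used.
have below_used n : (0 < n)%N -> (n < f v)%N -> n \in used.
  move=> n0 nv; have [u [[uv|uv] fu]] := f_nbhd v n n0 (ltnW nv).
    by rewrite -uv fu ltnn in nv.
  apply/mapP; exists u => //; rewrite mem_filter; apply/andP; split; first exact/asboolP.
  move: (all_s u); rewrite mem_cat inE => /or3P[//|/eqP uv'|u_post].
    by rewrite -uv' fu ltnn in nv.
  by move: (le_post u u_post); rewrite /= fu leqNgt nv.
have fv_unused : f v \notin used.
  by apply/negP => /mapP[x]; rewrite mem_filter => /andP[/asboolP/f_proper xv _] /esym.
have fv_pos := f_pos v; rewrite (@find_iota0 _ _ (f v).-1) ?(ltn_predK fv_pos) //.
- rewrite -(ltn_predK fv_pos) ltnS -[X in (X <= _)%N](size_iota 1).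
  apply: uniq_leq_size => [|n]; first exact: iota_uniq.
  by rewrite mem_iota add1n (ltn_predK fv_pos) => /andP[]; apply: below_used.
- move=> n n_lt; rewrite negbK; apply: below_used => //.
  by rewrite -(ltn_predK fv_pos) ltnS.
Qed.

Lemma ff_run_sorted_wall pre s :
  pairwise (relpre f leq) (pre ++ s) -> (forall u, u \in pre ++ s) ->
  ff_run I [seq (x, f x) | x <- pre] s = [seq (x, f x) | x <- pre ++ s].
Proof.
elim: s pre => [|v s IHs] pre sorted_s all_s /=; first by rewrite cats0.
rewrite filter_map -map_comp (first_fit_choice sorted_s all_s) -map_rcons.
by rewrite -cat_rcons; apply: IHs; rewrite cat_rcons.
Qed.

Lemma colors_used_le_chiFF : (colors_used f <= chiFF I)%N.
Proof.
set s := sort (relpre f leq) (enum V).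
have s_perm : perm_eq s (enum V) by rewrite perm_sort.
have [p ps] := perm_of_perm_eq_enum s_perm.
have sorted_s : pairwise (relpre f leq) s.
  rewrite -sorted_pairwise; last by move=> y x z; apply: leq_trans.
  by apply: sort_sorted => x y; apply: leq_total.
have run_s : ff_run I [::] s = [seq (x, f x) | x <- s].
  by apply: (@ff_run_sorted_wall [::]) => // u; rewrite (perm_mem s_perm) mem_enum.
apply: leq_trans (leq_bigmax p); rewrite ps /ff_colors run_s -map_comp.
by rewrite (perm_size (perm_undup (perm_mem (perm_map f s_perm)))).
Qed.

End FirstFitOnWalls.

Record wall := Wall { wV : finType; wI : wV -> R -> Prop; wf : wV -> nat }.
Arguments wI : clear implicits.
Arguments wf : clear implicits.

(* The invariant of the recursive construction: top color exactly [N]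
   (for [N > 0]) and depth at most [N / r + B], drawn inside [0, 1]. *)
Definition bounded_wall (r B : R) (N : nat) (w : wall) : Prop :=
  [/\ is_wall (wI w) (wf w),
      (forall v x, wI w v x -> 0 <= x <= 1),
      (forall v, (wf w v <= N)%N),
      ((0 < N)%N -> exists v, wf w v = N) &
      (forall x, ((depth (wI w) x)%:R : R) <= N%:R / r + B)].

Lemma bounded_wall0_void r B w : bounded_wall r B 0 w -> wV w -> False.
Proof.
case=> [[_ f_pos _ _] _ f_le _ _] v.
by move: (f_pos v) (f_le v); rewrite leqn0 => /[swap] /eqP ->.
Qed.

Definition empty_wall : wall := @Wall void (fun _ _ => False) (fun _ => 0%N).

Lemma bounded_empty_wall r B : 0 <= B -> 0 < r -> bounded_wall r B 0 empty_wall.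
Proof.
move=> B_ge0 r_gt0; split=> //=; try by [split; case | case].
by move=> x; rewrite /depth mul0r add0r (_ : #|_| = 0%N) //; apply: eq_card0; case.
Qed.

Section CapStep.
Variables (r : R) (Vc : finType) (Ic : Vc -> R -> Prop) (fc : Vc -> int)
          (J : Vc -> R -> Prop) (c : Vc -> int).
Hypotheses (r_ge1 : 1 <= r) (cap : is_cap Ic r fc J c).
Variable pts : (R -> Prop) -> R * R.
Hypothesis ptsP : forall P, positive_length P ->
  [/\ P (pts P).1, P (pts P).2 & (pts P).1 < (pts P).2].
Variable Mb : R.
Hypotheses (Mb_gt0 : 0 < Mb) (Ic_bounded : forall v t, Ic v t -> - Mb <= t <= Mb).
Variable N : nat.
Hypothesis N_gt0 : (0 < N)%N.
Let B : R := #|Vc|%:R.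
Variable W : nat -> wall.
Hypothesis W_bounded : forall M, (M < N)%N -> bounded_wall r B M (W M).

Lemma cap_interval v : is_interval (Ic v).
Proof. by case: cap => [[_ H] _ _ _ _]; case: (H v). Qed.

Lemma cap_col_le0 v : fc v <= 0.
Proof. by case: cap => [_ [[H _] _] _ _ _]. Qed.

Lemma cap_proper u v : adj Ic u v -> fc u <> fc v.
Proof. by case: cap => [_ [_ H] _ _ _]; apply: H. Qed.

Lemma cap_J v : [/\ is_interval (J v), positive_length (J v) & forall x, J v x -> Ic v x].
Proof. by case: cap. Qed.

Lemma cap_J_eq u v : Defs.meets (J u) (J v) -> J u = J v.
Proof. by case: cap => [_ _ _ H _] /H J_uv; apply/funext => x; apply/propext. Qed.

Definition Cset_above v := [seq z <- Cset Ic fc J v | (c v < z) && (z <= 0)].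

Lemma cap_c_spec v : [/\ c v <= -1,
    size (undup [seq z <- Cset Ic fc J v | z <= c v]) = 0%N,
    ((size (undup (Cset_above v)))%:R : R) <= - ((c v)%:~R) / r &
    (forall z : int, c v < z -> z <= fc v -> exists u, in_closed_nbhd Ic u v /\ fc u = z)].
Proof. by case: cap. Qed.

Lemma card_cap_gt0 : (0 < #|Vc|)%N.
Proof. by case: cap => [[[v _] _] _ _ _ _]; apply/card_gt0P; exists v. Qed.

(* Each cap vertex [v] carries a copy of the wall of top color [N + c v]. *)
Definition copy_top v := (N - `|c v|)%N.
Definition copy v := W (copy_top v).

(* The copy of [v] lives in the slot of index [2 * rank v] of a subdivision
   of [J v] into [2 * #|Vc|] pieces, so that vertices sharing the same [J]
   get disjoint slots. *)
Definition slot_width v := ((pts (J v)).2 - (pts (J v)).1) / (2 * #|Vc|)%:R.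
Definition slot_lo v := (pts (J v)).1 + (2 * enum_rank v)%:R * slot_width v.
Definition slot_hi v := slot_lo v + slot_width v.
Definition in_slot v t := slot_lo v <= t <= slot_hi v.

Definition copy_coord v (t : R) : R := - slot_lo v / slot_width v + (slot_width v)^-1 * t.

Definition copy_int v : wV (copy v) -> R -> Prop :=
  rescale (- slot_lo v / slot_width v) (slot_width v)^-1 (wI (copy v)).

Definition kept u := 0 < fc u + N%:Z.

Definition step_vert := ({u : Vc | kept u} + {v : Vc & wV (copy v)})%type.

Definition step_int (w : step_vert) : R -> Prop :=
  match w with inl u => Ic (val u) | inr s => copy_int (tagged s) end.

Definition step_col (w : step_vert) : nat :=
  match w with inl u => absz (fc (val u) + N%:Z) | inr s => wf _ (tagged s) end.

Lemma J_pts v : [/\ J v (pts (J v)).1, J v (pts (J v)).2 & (pts (J v)).1 < (pts (J v)).2].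
Proof. by case: (cap_J v) => _ /ptsP. Qed.

Lemma slot_width_gt0 v : 0 < slot_width v.
Proof.
case: (J_pts v) => _ _ lt12.
by rewrite divr_gt0 ?subr_gt0 // ltr0n muln_gt0 card_cap_gt0.
Qed.

Lemma slot_sub_J v t : in_slot v t -> J v t.
Proof.
case/andP=> lo_t t_hi; case: (J_pts v) => J1 J2 _; case: (cap_J v) => [[_ J_conv] _ _].
have w_gt0 := slot_width_gt0 v.
have total : (2 * #|Vc|)%:R * slot_width v = (pts (J v)).2 - (pts (J v)).1.
  by rewrite mulrC divfK // pnatr_eq0 muln_eq0 negb_or /= -lt0n card_cap_gt0.
have : ((2 * enum_rank v).+1%:R : R) <= (2 * #|Vc|)%:R.
  have rank_lt : (enum_rank v < #|Vc|)%N by exact: ltn_ord.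
  by rewrite ler_nat; lia.
rewrite -addn1 natrD => rank_le.
apply: (J_conv _ t _ J1 J2).
  by apply: le_trans lo_t; rewrite /slot_lo lerDl mulr_ge0 // ltW.
by apply: le_trans t_hi _; rewrite /slot_hi /slot_lo; nra.
Qed.

Lemma slot_inj v v' t : in_slot v t -> in_slot v' t -> v = v'.
Proof.
move=> tv tv'; have J_vv' : J v = J v'.
  by apply: cap_J_eq; exists t; split; apply: slot_sub_J.
suff sep u u' : J u = J u' -> (enum_rank u < enum_rank u')%N -> slot_hi u < slot_lo u'.
  move: tv tv' => /andP[lo_t t_hi] /andP[lo_t' t_hi'].
  case: (ltngtP (enum_rank v) (enum_rank v')) => [vv'|v'v|/ord_inj/enum_rank_inj //].
    by have := lt_le_trans (sep v v' J_vv' vv') (le_trans lo_t' t_hi); rewrite ltxx.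
  by have := lt_le_trans (sep v' v (esym J_vv') v'v) (le_trans lo_t t_hi'); rewrite ltxx.
move=> J_uu' uu'; have w_gt0 := slot_width_gt0 u.
have -> : slot_lo u' = (pts (J u)).1 + (2 * enum_rank u')%:R * slot_width u.
  by rewrite /slot_lo /slot_width J_uu'.
have : ((2 * enum_rank u)%:R : R) + 2 <= (2 * enum_rank u')%:R.
  by rewrite -natrD ler_nat; lia.
rewrite /slot_hi /slot_lo; nra.
Qed.

Lemma copy_bounded v : bounded_wall r B (copy_top v) (copy v).
Proof. by apply: W_bounded; case: (cap_c_spec v) => c_le _ _ _; rewrite /copy_top; lia. Qed.

Lemma copy_int_slot v (q : wV (copy v)) t : copy_int q t -> in_slot v t.
Proof.
case: (copy_bounded v) => _ in01 _ _ _ /in01/andP[z_ge0 z_le1].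
have w_gt0 := slot_width_gt0 v.
have -> : t = slot_lo v + (- slot_lo v / slot_width v + (slot_width v)^-1 * t) * slot_width v.
  by field; rewrite gt_eqF.
by rewrite /in_slot /slot_hi; apply/andP; split; nra.
Qed.

Lemma copy_int_Ic v (q : wV (copy v)) t : copy_int q t -> Ic v t.
Proof. by move/copy_int_slot/slot_sub_J; case: (cap_J v) => _ _; apply. Qed.

Lemma copy_int_nonempty v (q : wV (copy v)) : exists t, copy_int q t.
Proof.
case: (copy_bounded v) => [[I_int _ _ _] _ _ _ _]; have [[z Iz] _] := I_int q.
have w_gt0 := slot_width_gt0 v.
exists (slot_lo v + slot_width v * z); rewrite /copy_int /rescale.
by have -> : - slot_lo v / slot_width v + (slot_width v)^-1 * (slot_lo v + slot_width v * z) = z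
  by field; rewrite gt_eqF.
Qed.

Lemma copy_col_le v (q : wV (copy v)) : (wf _ q : int) <= N%:Z + c v.
Proof.
case: (copy_bounded v) => [[_ f_pos _ _] _ f_le _ _]; case: (cap_c_spec v) => c_le _ _ _.
by have := f_pos q; have := f_le q; rewrite /copy_top; lia.
Qed.

Lemma cap_col_in_Cset_above u v t : Ic u t -> J v t -> fc u \in Cset_above v.
Proof.
move=> Iu Jv; have in_C : fc u \in Cset Ic fc J v.
  by apply: map_f; rewrite mem_filter mem_enum andbT; apply/asboolP; exists t.
case: (cap_c_spec v) => _ /size0nil none_le _ _.
rewrite mem_filter in_C cap_col_le0 andbT andbT ltNge; apply/negP => le_c.
have : fc u \in undup [seq z <- Cset Ic fc J v | z <= c v] by rewrite mem_undup mem_filter le_c.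
by rewrite none_le.
Qed.

Lemma c_lt_cap_col u v t : Ic u t -> J v t -> c v < fc u.
Proof.
by move=> Iu Jv; move: (cap_col_in_Cset_above Iu Jv); rewrite mem_filter => /andP[/andP[]].
Qed.

(* Kept cap vertices through a point of [J v] form a clique, so their colors
   are distinct, and they all lie in [Cset_above v]. *)
Lemma kept_depth_le v x : J v x ->
  (#|[set u : {u | kept u} | `[< Ic (val u) x >]]|
    <= size (undup (Cset_above v)))%N.
Proof.
move=> Jx; rewrite cardE -(size_map (fun u => fc (val u))).
apply: uniq_leq_size => [|z /mapP[u]]; last first.
  by rewrite mem_enum inE => /asboolP Iu ->; rewrite mem_undup; apply: cap_col_in_Cset_above Jx.
rewrite map_inj_in_uniq ?enum_uniq // => u1 u2.
rewrite !mem_enum !inE => /asboolP I1 /asboolP I2 f12; apply/val_inj/eqP/negPn/negP => u12.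
by apply: (cap_proper _ f12); split; [apply/eqP | exists x].
Qed.

Lemma adj_copy_int v (q q' : wV (copy v)) : adj (@copy_int v) q q' <-> adj (wI (copy v)) q q'.
Proof. by apply: adj_rescale; rewrite invr_gt0 slot_width_gt0. Qed.

Lemma tagged_inj v (q q' : wV (copy v)) :
  existT (fun v => wV (copy v)) v q = existT _ v q' -> q = q'.
Proof.
by move/(congr1 (tagged_as (existT (fun v => wV (copy v)) v q))); rewrite !tagged_asE.
Qed.

Lemma step_proper w1 w2 : adj step_int w1 w2 -> step_col w1 <> step_col w2.
Proof.
case=> w12 [t [I1 I2]].
case: w1 w12 I1 => [[u1 k1]|[v1 q1]]; case: w2 I2 => [[u2 k2]|[v2 q2]] /= I2 w12 I1.
- have u12 : u1 <> u2 by move=> u12; apply: w12; congr inl; apply: val_inj.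
  have := @cap_proper u1 u2 (conj u12 (ex_intro _ t (conj I1 I2))).
  by have := k1; have := k2; rewrite /kept; lia.
- have := c_lt_cap_col I1 (slot_sub_J (copy_int_slot I2)).
  by have := copy_col_le q2; have := k1; rewrite /kept; lia.
- have := c_lt_cap_col I2 (slot_sub_J (copy_int_slot I1)).
  by have := copy_col_le q1; have := k2; rewrite /kept; lia.
- have v12 := slot_inj (copy_int_slot I1) (copy_int_slot I2); subst v2.
  case: (copy_bounded v1) => [[_ _ f_proper _] _ _ _ _]; apply: f_proper.
  apply/adj_copy_int; split; last by exists t.
  by move=> q12; apply: w12; rewrite q12.
Qed.

Lemma kept_nbhd (u : {u | kept u}) k : (1 <= k)%N -> (k <= step_col (inl u))%N ->
  exists w, in_closed_nbhd step_int w (inl u) /\ step_col w = k.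
Proof.
case: u => u ku k1 /= k_le; have [c_le _ _ c_nbhd] := cap_c_spec u.
have [k_copy|k_cap] := boolP ((k : int) <= N%:Z + c u).
  case: (copy_bounded u) => [[_ _ _ f_nbhd] _ _ top _].
  have top_gt0 : (0 < copy_top u)%N by rewrite /copy_top; lia.
  have [q0 q0_top] := top top_gt0.
  have k_le_q0 : (k <= wf _ q0)%N by rewrite q0_top /copy_top; lia.
  have [q [_ qk]] := f_nbhd q0 k k1 k_le_q0.
  exists (inr (existT _ u q)); split => //; right; split => //.
  by have [t It] := copy_int_nonempty q; exists t; split => //; apply: copy_int_Ic It.
have [u' [u'u fu']] : exists u', in_closed_nbhd Ic u' u /\ fc u' = k%:Z - N%:Z.
  by apply: c_nbhd; move: k_cap k_le ku; rewrite /kept; lia.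
have ku' : kept u' by rewrite /kept fu'; lia.
exists (inl (exist _ u' ku')); split; last by rewrite /= fu'; lia.
case: u'u => [u'u|[u'u meet]]; first by left; congr inl; apply: val_inj.
by right; split=> // -[].
Qed.

Lemma copy_nbhd v (q : wV (copy v)) k : (1 <= k)%N -> (k <= wf _ q)%N ->
  exists w, in_closed_nbhd step_int w (inr (existT _ v q)) /\ step_col w = k.
Proof.
move=> k1 k_le; case: (copy_bounded v) => [[_ _ _ f_nbhd] _ _ _ _].
have [q' [q'q fq']] := f_nbhd q k k1 k_le.
exists (inr (existT _ v q')); split => //.
case: q'q => [->|q'q]; [by left | right].
have [q'q' meet] := (adj_copy_int q' q).2 q'q.
by split=> // -[/tagged_inj].
Qed.

Lemma step_is_wall : is_wall step_int step_col.
Proof.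
split.
- case=> [u|[v q]] /=; first exact: cap_interval.
  case: (copy_bounded v) => [[I_int _ _ _] _ _ _ _].
  by apply: is_interval_affine; rewrite ?invr_gt0 ?slot_width_gt0.
- by case=> [[u ku]|[v q]] /=; [move: ku; rewrite /kept; lia | case: (copy_bounded v) => -[]].
- exact: step_proper.
- by case=> [u|[v q]] k k1 k_le; [exact: kept_nbhd | exact: copy_nbhd].
Qed.

Lemma copies_depth_le v x : in_slot v x ->
  (#|[set s : {v : Vc & wV (copy v)} | `[< copy_int (tagged s) x >]]|
    <= depth (wI (copy v)) (copy_coord v x))%N.
Proof.
move=> xv; apply: card_set_tag_le => -[v' q] /asboolP /copy_int_slot /= x_v'.
exact: slot_inj x_v' xv.
Qed.

Lemma step_depth x : ((depth step_int x)%:R : R) <= N%:R / r + B.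
Proof.
rewrite /depth (card_set_sum (fun w => `[< step_int w x >])) natrD /=.
set A := #|[set u | _]|; set C := #|[set s | _]|.
have r_gt0 : 0 < r := lt_le_trans ltr01 r_ge1.
have N_r_ge0 : 0 <= N%:R / r by rewrite divr_ge0 // ltW.
have A_le_B : (A%:R : R) <= B.
  by rewrite ler_nat; apply: leq_trans (max_card _) _; rewrite card_sig max_card.
suff [C_le|->] : (C%:R : R) <= N%:R / r + B - A%:R \/ C = 0%N; [lra | lra |].
have [[v xv]|no_slot] := pselect (exists v, in_slot v x); last first.
  right; apply: eq_card0 => -[v q]; rewrite inE; apply/asboolP => /copy_int_slot xv.
  by apply: no_slot; exists v.
have [top0|top_gt0] := posnP (copy_top v).
  right; apply/eqP; rewrite -leqn0; apply: leq_trans (copies_depth_le xv) _.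
  rewrite leqn0; apply/eqP/eq_card0 => q.
  by have := copy_bounded v; rewrite top0 => /bounded_wall0_void/(_ q).
left; case: (copy_bounded v) => _ _ _ _ /(_ (copy_coord v x)).
move=> copy_depth; have [c_le _ window _] := cap_c_spec v.
have C_le : (C%:R : R) <= (copy_top v)%:R / r + B.
  by apply: le_trans copy_depth; rewrite ler_nat copies_depth_le.
have A_le : (A%:R : R) <= - (c v)%:~R / r.
  by apply: le_trans window; rewrite ler_nat; apply/kept_depth_le/slot_sub_J.
have top_eq : (copy_top v)%:Z = N%:Z + c v by move: top_gt0; rewrite /copy_top; lia.
have : ((copy_top v)%:R : R) = N%:R + (c v)%:~R.
  by rewrite -[(N%:R : R)]/((N%:Z)%:~R) -intrD -top_eq.
by move=> top; rewrite top mulrDl in C_le; rewrite mulNr in A_le; lra.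
Qed.

Lemma step_int_bounded w t : step_int w t -> - Mb <= t <= Mb.
Proof.
by case: w => [u|[v q]] /= It; [exact: Ic_bounded It | exact: Ic_bounded (copy_int_Ic It)].
Qed.

Definition cap_step : wall := @Wall step_vert (rescale (- Mb) (2 * Mb) step_int) step_col.

Lemma bounded_cap_step : bounded_wall r B N cap_step.
Proof.
have m_gt0 : 0 < 2 * Mb by rewrite mulr_gt0.
split=> /=.
- exact: is_wall_rescale step_is_wall.
- by move=> w z /step_int_bounded/andP[? ?]; apply/andP; split; nra.
- case=> [[u ku]|[v q]] /=; first by have := cap_col_le0 u; have := ku; rewrite /kept; lia.
  by case: (copy_bounded v) => _ _ f_le _ _; apply: leq_trans (f_le q) (leq_subr _ _).
- move=> _; case: cap => [_ [[_ [v0 fv0]] _] _ _ _].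
  have kv0 : kept v0 by rewrite /kept fv0; lia.
  by exists (inl (exist _ v0 kv0)); rewrite /= fv0.
- by move=> z; apply: step_depth.
Qed.

End CapStep.

Lemma bounded_walls_exist r (Vc : finType) (Ic : Vc -> R -> Prop) fc J c :
  1 <= r -> is_cap Ic r fc J c -> forall N, exists w, bounded_wall r #|Vc|%:R N w.
Proof.
move=> r_ge1 cap; have r_gt0 : 0 < r := lt_le_trans ltr01 r_ge1.
have /boolp.choice[pts ptsP] : forall P : R -> Prop, exists xy : R * R,
    positive_length P -> [/\ P xy.1, P xy.2 & xy.1 < xy.2].
  move=> P; have [[x [y [Px [Py xy]]]]|notP] := pselect (positive_length P).
    by exists (x, y).
  by exists (0, 0) => /notP.
have Ic_finite v : finite_length (Ic v) by case: cap => [[_ /(_ v)[]]].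
have [Mb [Mb_gt0 Ic_bounded]] := finite_family_bounded Ic_finite.
elim/ltn_ind => N IH; have [->|N_gt0] := posnP N.
  by exists empty_wall; apply: bounded_empty_wall.
have /boolp.choice[W W_bounded] : forall M, exists w,
    (M < N)%N -> bounded_wall r #|Vc|%:R M w.
  by move=> M; have [/IH[w wP]|_] := ltnP M N; [exists w | exists empty_wall].
have step := bounded_cap_step r_ge1 cap ptsP Mb_gt0 Ic_bounded N_gt0 W_bounded.
by eexists; exact: step.
Qed.

Lemma colors_used_ge (V : finType) (I : V -> R -> Prop) (f : V -> nat) v :
  is_wall I f -> (f v <= colors_used f)%N.
Proof.
case=> _ _ _ f_nbhd; rewrite -[X in (X <= _)%N](size_iota 1).
apply: uniq_leq_size; first exact: iota_uniq.
move=> k; rewrite mem_iota add1n ltnS => /andP[k1 k_le].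
have [u [_ <-]] := f_nbhd v k k1 k_le.
by rewrite mem_undup; apply/map_f/mem_enum.
Qed.

Section CliquePadding.
Variables (w : wall) (k : nat).
Hypotheses (w_wall : is_wall (wI w) (wf w)) (w_in01 : forall v x, wI w v x -> 0 <= x <= 1).
Hypothesis w_depth : forall x, (depth (wI w) x <= k)%N.

(* A clique of [k] copies of [2, 3], beside the wall, makes the clique number
   exactly [k]. *)
Definition pad_vert := (wV w + 'I_k)%type.

Definition pad_int (u : pad_vert) : R -> Prop :=
  match u with inl v => wI w v | inr _ => fun x => 2 <= x <= 3 end.

Definition pad_col (u : pad_vert) : nat :=
  match u with inl v => wf w v | inr i => i.+1 end.

Lemma is_interval_seg23 : is_interval (fun x : R => 2 <= x <= 3).
Proof.
split; first by exists 2; apply/andP; split; lra.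
by move=> x y z /andP[? ?] /andP[? ?] ? ?; apply/andP; split; lra.
Qed.

Lemma wall_seg23_disj v t : ~ (wI w v t /\ 2 <= t <= 3).
Proof. by case=> /w_in01/andP[? ?] /andP[? ?]; lra. Qed.

Lemma is_wall_pad : is_wall pad_int pad_col.
Proof.
case: w_wall => I_int f_pos f_proper f_nbhd; split.
- by case=> [v|i] /=; [exact: I_int | exact: is_interval_seg23].
- by case.
- move=> [v1|i1] [v2|i2] [u12 [t [I1 I2]]] /=.
  + by apply: f_proper; split; [move=> v12; apply: u12; rewrite v12 | exists t].
  + by case: (wall_seg23_disj (conj I1 I2)).
  + by case: (wall_seg23_disj (conj I2 I1)).
  + by move=> [i12]; apply: u12; congr inr; apply: val_inj.
- case=> [v|i] z z1 z_le /=.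
  + have [u [uv fu]] := f_nbhd v z z1 z_le; exists (inl u); split=> //.
    by case: uv => [->|[uv meet]]; [left | right; split=> // -[]].
  + have z_lt : (z.-1 < k)%N by move: (ltn_ord i) z_le z1 => /=; lia.
    exists (inr (Ordinal z_lt)); split; last by rewrite /= prednK.
    have [zi|zi] := eqVneq (Ordinal z_lt) i; first by left; rewrite zi.
    by right; split; [case=> /eqP; rewrite (negbTE zi) | exists 2; split; apply/andP; split; lra].
Qed.

Lemma omega_pad : omega pad_int = k.
Proof.
apply/anti_leq/andP; split.
  apply: omega_le_depth; first by case: is_wall_pad.
  move=> x; rewrite /depth (card_set_sum (fun u => `[< pad_int u x >])) /=.
  have [x23|x23] := boolP `[< 2 <= x <= 3 >].
    rewrite (_ : #|[set v | _]| = 0%N) ?add0n; last first.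
      apply: eq_card0 => v; rewrite inE; apply/asboolP => Iv.
      by apply: (@wall_seg23_disj v x); split=> //; apply/asboolP.
    by apply: leq_trans (max_card _) _; rewrite card_ord.
  rewrite (_ : #|[set i : 'I_k | _]| = 0%N) ?addn0; first exact: w_depth.
  by apply: eq_card0 => i; rewrite inE; apply: negbTE.
apply: (@leq_trans #|[set @inr (wV w) 'I_k i | i : 'I_k]|).
  by rewrite card_imset ?cardsT ?card_ord // => i j [].
apply: card_clique_le_omega => _ _ /imsetP[i _ ->] /imsetP[j _ ->] ij.
by split=> //; exists 2; split; apply/andP; split; lra.
Qed.

End CliquePadding.

Lemma cap_walls r (Vc : finType) (Ic : Vc -> R -> Prop) fc J c :
  1 <= r -> is_cap Ic r fc J c -> forall k : nat,
  exists (V : finType) (I : V -> R -> Prop) (f : V -> nat),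
    [/\ is_wall I f, omega I = k & r * k%:R - (r * #|Vc|%:R + 1) <= (colors_used f)%:R].
Proof.
move=> r_ge1 cap k; have r_gt0 : 0 < r := lt_le_trans ltr01 r_ge1.
set x := r * (k%:R - #|Vc|%:R); set N := Num.truncn x.
have [w w_bdd] := bounded_walls_exist r_ge1 cap N.
have [w_wall w_in01 _ w_top w_depth] := w_bdd.
have depth_le y : (depth (wI w) y <= k)%N.
  have [N0|N_gt0] := posnP N.
    rewrite /depth (_ : #|_| = 0%N) //; apply: eq_card0 => v.
    by move: w_bdd; rewrite N0 => /bounded_wall0_void/(_ v).
  have N_le_x : N%:R <= x by rewrite truncn_le (le_trans ler01) // -truncn_gt0.
  have : N%:R / r <= k%:R - #|Vc|%:R by rewrite ler_pdivrMr // mulrC.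
  by move: (w_depth y); rewrite -(ler_nat R); lra.
exists (pad_vert w k), (@pad_int w k), (@pad_col w k); split.
- exact: is_wall_pad.
- exact: omega_pad.
- have -> : r * k%:R - (r * #|Vc|%:R + 1) = x - 1 by rewrite /x; ring.
  have : x < N.+1%:R := truncnS_gt x.
  rewrite -natr1 => x_lt; apply: le_trans (ltW (_ : x - 1 < N%:R)) _; first lra.
  rewrite ler_nat; have [->//|N_gt0] := posnP N.
  by have [v <-] := w_top N_gt0; apply: (colors_used_ge (inl v)); apply: is_wall_pad.
Qed.

Lemma Rsup_ge_of_walls (r b : R) :
  (forall k : nat, exists (V : finType) (I : V -> R -> Prop) (f : V -> nat),
    [/\ is_wall I f, omega I = k & r * k%:R - b <= (colors_used f)%:R]) ->
  (r%:E <= Rsup)%E.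
Proof.
move=> walls; apply/lee_subgt0Pr => e e_gt0.
pose k := (Num.truncn (`|b| / e)).+1.
have k_gt : `|b| / e < k%:R := truncnS_gt _.
have [V [I [f [f_wall omega_k colors_ge]]]] := walls k.
have [v _] : exists v : V, True.
  have : (k <= #|V|)%N by rewrite -omega_k; apply/bigmax_leqP => A _; apply: max_card.
  by move/(leq_trans (ltn0Sn _))/card_gt0P => -[v _]; exists v.
apply: (le_trans _ (@ereal_sup_ubound _ _ (((chiFF I)%:R / (omega I)%:R : R)%:E) _)).
- have chi_ge : ((colors_used f)%:R : R) <= (chiFF I)%:R.
    by rewrite ler_nat; apply: colors_used_le_chiFF.
  rewrite -EFinB lee_fin omega_k ler_pdivlMr ?ltr0n // mulrBl.
  rewrite ltr_pdivrMr // in k_gt; have := ler_norm b.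
  by lra.
- by exists V, I; split; [exists v | case: f_wall |].
Qed.

Theorem mainTheorem3 (r : R) :
  1 <= r ->
  (exists (V : finType) (I : V -> R -> Prop) (f : V -> int)
          (J : V -> R -> Prop) (c : V -> int), is_cap I r f J c) ->
  (r%:E <= Rsup)%E /\
  exists b : R, forall k : nat,
    exists (V : finType) (I : V -> R -> Prop) (f : V -> nat),
      [/\ is_wall I f, omega I = k & r * k%:R - b <= (colors_used f)%:R].
Proof.
move=> r_ge1 [V [I [f [J [c cap]]]]].
have walls := cap_walls r_ge1 cap.
by split; [exact: Rsup_ge_of_walls walls | exists (r * #|V|%:R + 1)].
Qed.
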